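(* Consider configurations consisting only of colored chips (no jokers, no dominoes). Call such a configuration $E$ sufficient if $E$ achieves $3$ dominoes, and minimal sufficient if $E$ is sufficient and no proper sub-configuration of $E$ (i.e. one obtained by removing at least one chip) achieves $3$ dominoes. Then, up to permutation of the three colors, there are exactly two minimal sufficient configurations: $M=(3,3,1)$ (three chips of one color, three of a second, one of the third) and $N=(3,2,2)$. Moreover, for a game with $p\ge1$ players with initial configuration $I$ (consisting of $2p$ colored chips), survival is possible if and only if $I$ contains (componentwise, after some permutation of colors) $M$ or $N$. Finally, a game with $p$ players is non-trivial if and only if $p\ge 4$.
   Context: Game model: there are colored chips of three colors, ''jokers'', and dominoes. A configuration is a tuple $(a,b,c,x,d)$ of nonnegative integers: $a,b,c$ colored chips of the three colors, $x$ jokers, $d$ dominoes. Two kinds of exchanges are allowed: Rule 1: remove three chips, consisting of some number $j\in\{0,1,2,3\}$ of jokers together with $3-j$ colored chips of pairwise distinct colors, and add one domino and one joker. Rule 2: if $d\ge 3$, remove three dominoes and add seven jokers. (Jokers model chips returned by the exchanges, whose color may be freely chosen.) A configuration $E$ yields $F$ if $F$ is obtained from $E$ by a finite (possibly empty) sequence of exchanges; $E$ achieves $F$ if $E$ yields some configuration that is componentwise $\ge F$. A game with $p$ players starts from an initial configuration $I$ consisting of $2p$ colored chips (any color distribution), no jokers and no dominoes; ''survival'' means $I$ achieves $p$ dominoes. A game with $p$ players is trivial if survival is impossible for every such initial configuration $I$, and non-trivial otherwise. *)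

From mathcomp Require Import all_boot.
From Stdlib Require Import Relations.
Set Implicit Arguments. Unset Strict Implicit. Unset Printing Implicit Defensive.

(* A configuration (a,b,c,x,d): a,b,c colored chips, x jokers, d dominoes. *)
Record config := Config { ca : nat; cb : nat; cc : nat; cx : nat; cd : nat }.

(* Rule 1: remove j jokers and 3-j colored chips of pairwise distinct colors
   (ea/eb/ec indicate whether one chip of color a/b/c is removed),
   add one domino and one joker. *)
Definition rule1 (E F : config) : Prop :=
  exists (ea eb ec : bool) (j : nat),
    [/\ ea + eb + ec + j = 3, ea <= ca E, eb <= cb E, ec <= cc E & j <= cx E] /\
    F = Config (ca E - ea) (cb E - eb) (cc E - ec) (cx E - j + 1) (cd E + 1).

Definition rule2 (E F : config) : Prop :=
  3 <= cd E /\ F = Config (ca E) (cb E) (cc E) (cx E + 7) (cd E - 3).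

Definition exchange (E F : config) : Prop := rule1 E F \/ rule2 E F.

Definition yields : config -> config -> Prop := clos_refl_trans config exchange.

Definition cle (F G : config) : Prop :=
  [/\ ca F <= ca G, cb F <= cb G, cc F <= cc G, cx F <= cx G & cd F <= cd G].

Definition achieves (E F : config) : Prop := exists G, yields E G /\ cle F G.

Definition chips_only (E : config) : Prop := cx E = 0 /\ cd E = 0.

Definition dominoes (n : nat) : config := Config 0 0 0 0 n.

Definition sufficient (E : config) : Prop := achieves E (dominoes 3).

Definition minimal_sufficient (E : config) : Prop :=
  chips_only E /\ sufficient E /\
  forall E', cle E' E -> E' <> E -> ~ sufficient E'.

Definition color_perm (E F : config) : Prop :=
  perm_eq [:: ca E; cb E; cc E] [:: ca F; cb F; cc F] /\ cx F = cx E /\ cd F = cd E.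

Definition M : config := Config 3 3 1 0 0.
Definition N : config := Config 3 2 2 0 0.

Definition initial (p : nat) (I : config) : Prop :=
  chips_only I /\ ca I + cb I + cc I = 2 * p.

Definition survival (p : nat) (I : config) : Prop := achieves I (dominoes p).

Definition trivial_game (p : nat) : Prop := forall I, initial p I -> ~ survival p I.
Definition nontrivial_game (p : nat) : Prop := ~ trivial_game p.

From mathcomp Require Import all_boot.
From mathcomp Require Import zify.
From Stdlib Require Import Relations Classical.
Set Implicit Arguments. Unset Strict Implicit.

(* Sufficiency: exchanges are monotone (extra material never hurts), every
   colour permutation of M or N can be cleared by three greedy Rule-1 moves
   followed by Rule 2, leaving 8 jokers, and from 7 jokers on one can pump
   jokers without bound (three Rule-1 moves on jokers plus Rule 2 gain one
   joker) and then turn them into as many dominoes as wanted.  Hence any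
   configuration containing a copy of M or N achieves every number of dominoes.
   Necessity: starting from colored chips only, no Rule 2 can happen before
   three dominoes exist, and the configurations reachable with at most two
   dominoes are completely described by an invariant ([early_state]).  The
   third domino forces each colour to be used 1 to 3 times, with at least 7
   chips used in total, and such a usage pattern dominates a copy of M or N.
   The three parts of the theorem then follow by counting chips. *)

Definition chips (E : config) : nat := ca E + cb E + cc E.

Definition pattern (F : config) : Prop := color_perm M F \/ color_perm N F.

Definition containsMN (E : config) : Prop := exists F, pattern F /\ cle F E.

Definition cadd (E X : config) : config :=
  Config (ca E + ca X) (cb E + cb X) (cc E + cc X) (cx E + cx X) (cd E + cd X).

Lemma yields_trans E F G : yields E F -> yields F G -> yields E G.
Proof. exact: rt_trans. Qed.

Lemma achieves_yields E G F : yields E G -> achieves G F -> achieves E F.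
Proof. by move=> hEG [H [hGH hle]]; exists H; split=> //; apply: yields_trans hGH. Qed.

Lemma exchange_add E G X : exchange E G -> exchange (cadd E X) (cadd G X).
Proof.
case=> [[ea [eb [ec [j [[hsum ha hb hc hx] ->]]]]]|[hd ->]].
- left; exists ea, eb, ec, j; split; first by rewrite /cadd /=; split=> //=; lia.
  rewrite /cadd /=; f_equal=> /=; case: ea ha {hsum}; case: eb hb; case: ec hc => /= *; lia.
- by right; rewrite /cadd /=; split=> /=; [lia | f_equal=> /=; lia].
Qed.

Lemma cle_split F E : cle F E -> exists X, E = cadd F X.
Proof.
case=> ha hb hc hx hd.
exists (Config (ca E - ca F) (cb E - cb F) (cc E - cc F) (cx E - cx F) (cd E - cd F)).
by rewrite /cadd; case: E ha hb hc hx hd => ? ? ? ? ? /= *; f_equal; lia.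
Qed.

Lemma yields_add E G X : yields E G -> yields (cadd E X) (cadd G X).
Proof.
elim=> [x y h | x | x y z _ hxy _ hyz].
- exact/rt_step/exchange_add.
- exact: rt_refl.
- exact: yields_trans hxy hyz.
Qed.

Lemma jokers_to_domino a b c x d :
  3 <= x -> yields (Config a b c x d) (Config a b c (x - 2) d.+1).
Proof.
move=> hx; apply: rt_step; left; exists false, false, false, 3.
by split; [split | f_equal=> /=; lia].
Qed.

(* The joker pump: three Rule-1 moves on jokers then Rule 2 gain one joker. *)
Lemma joker_pump a b c x d :
  7 <= x -> yields (Config a b c x d) (Config a b c x.+1 d).
Proof.
move=> hx.
eapply yields_trans; first (apply: jokers_to_domino; lia).
eapply yields_trans; first (apply: jokers_to_domino => /=; lia).
eapply yields_trans; first (apply: jokers_to_domino => /=; lia).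
apply: rt_step; right; split=> /=; [lia | f_equal; lia].
Qed.

Lemma jokers_grow a b c x d k :
  7 <= x -> yields (Config a b c x d) (Config a b c (x + k) d).
Proof.
move=> hx; elim: k => [|k IH]; first by rewrite addn0; apply: rt_refl.
by apply: yields_trans IH _; rewrite addnS; apply: joker_pump; lia.
Qed.

Lemma jokers_to_dominoes a b c d n :
  yields (Config a b c (2 * n + 1) d) (Config a b c 1 (d + n)).
Proof.
elim: n d => [|n IH] d; first by rewrite addn0; apply: rt_refl.
eapply yields_trans; first (apply: jokers_to_domino; lia).
have -> : 2 * n.+1 + 1 - 2 = 2 * n + 1 by lia.
have -> : d + n.+1 = d.+1 + n by lia.
exact: IH.
Qed.

Lemma jokers_achieve_dominoes G p : 7 <= cx G -> achieves G (dominoes p).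
Proof.
case: G => a b c x d /= hx.
exists (Config a b c 1 (d + (x + p))); split; last by split=> /=; lia.
apply: yields_trans (jokers_grow _ _ _ _ (x + 2 * p + 1) hx) _.
have -> : x + (x + 2 * p + 1) = 2 * (x + p) + 1 by lia.
exact: jokers_to_dominoes.
Qed.

Definition greedy_step (E : config) : config :=
  let ea := 0 < ca E in let eb := 0 < cb E in let ec := 0 < cc E in
  Config (ca E - ea) (cb E - eb) (cc E - ec)
         (cx E - (3 - (ea + eb + ec)) + 1) (cd E + 1).

Definition greedy_ok (E : config) : bool :=
  3 - ((0 < ca E) + (0 < cb E) + (0 < cc E)) <= cx E.

Lemma greedy_step_yields E : greedy_ok E -> yields E (greedy_step E).
Proof.
move=> h; apply: rt_step; left.
exists (0 < ca E), (0 < cb E), (0 < cc E), (3 - ((0 < ca E) + (0 < cb E) + (0 < cc E))).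
split=> //; split=> //.
- by case: (0 < ca E); case: (0 < cb E); case: (0 < cc E).
- by case: (ca E).
- by case: (cb E).
- by case: (cc E).
Qed.

(* Three greedy moves followed by Rule 2; its side conditions are decidable,
   so it applies by computation on concrete configurations. *)
Lemma greedy_clearing E :
  let G := greedy_step (greedy_step (greedy_step E)) in
  [&& greedy_ok E, greedy_ok (greedy_step E), greedy_ok (greedy_step (greedy_step E))
    & 3 <= cd G] ->
  yields E (Config (ca G) (cb G) (cc G) (cx G + 7) (cd G - 3)).
Proof.
move=> G /and4P [h1 h2 h3 h4].
apply: yields_trans (greedy_step_yields h1) _.
apply: yields_trans (greedy_step_yields h2) _.
apply: yields_trans (greedy_step_yields h3) _.
by apply: rt_step; right.
Qed.

Definition pattern_shapes : seq (nat * nat * nat) :=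
  [:: (3,3,1); (3,1,3); (1,3,3); (3,2,2); (2,3,2); (2,2,3)].

Lemma pattern_shape F :
  pattern F -> [/\ cx F = 0, cd F = 0 & (ca F, cb F, cc F) \in pattern_shapes].
Proof.
case: F => x y z u v; rewrite /pattern /color_perm /=.
case=> [[hp [-> ->]] | [hp [-> ->]]]; split=> //.
all: have hx := perm_mem hp x; have hy := perm_mem hp y; have hz := perm_mem hp z.
all: rewrite !inE eqxx ?orbT in hx hy hz; move: hx hy hz hp.
all: by case: x => [|[|[|[|x]]]] //=; case: y => [|[|[|[|y]]]] //=;
        case: z => [|[|[|[|z]]]].
Qed.

Lemma pattern_chips F : pattern F -> [/\ chips F = 7, cx F = 0 & cd F = 0].
Proof.
case/pattern_shape=> -> ->; rewrite /chips; case: F => x y z ? ? /=.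
by rewrite !inE => /or4P [|||/or3P []] /eqP [-> -> ->].
Qed.

Lemma pattern_yields_jokers F : pattern F -> yields F (Config 0 0 0 8 0).
Proof.
case/pattern_shape; case: F => x y z u v /= -> ->.
by rewrite !inE => /or4P [|||/or3P []] /eqP [-> -> ->]; apply: greedy_clearing.
Qed.

Lemma containsMN_achieves E p : containsMN E -> achieves E (dominoes p).
Proof.
case=> F [hF /cle_split [X ->]].
apply: achieves_yields (yields_add X (pattern_yields_jokers hF)) _.
by apply: jokers_achieve_dominoes; rewrite /cadd /=; lia.
Qed.

Lemma large_usage_containsMN E ua ub uc :
  0 < ua <= 3 -> 0 < ub <= 3 -> 0 < uc <= 3 -> 7 <= ua + ub + uc ->
  ua <= ca E -> ub <= cb E -> uc <= cc E -> containsMN E.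
Proof.
move=> hua hub huc hsum hA hB hC.
have below F : pattern F -> ca F <= ua -> cb F <= ub -> cc F <= uc -> containsMN E.
  move=> hF hFa hFb hFc; exists F; split=> //.
  by have [_ hx hd] := pattern_chips hF; split; lia.
move: hua hub huc hsum below {hA hB hC}.
case: ua => [|[|[|[|ua]]]] //=; case: ub => [|[|[|[|ub]]]] //=;
  case: uc => [|[|[|[|uc]]]] //= _ _ _ _ below.
all: first [ by apply: (below (Config 3 3 1 0 0)); [left|..]
           | by apply: (below (Config 3 1 3 0 0)); [left|..]
           | by apply: (below (Config 1 3 3 0 0)); [left|..]
           | by apply: (below (Config 3 2 2 0 0)); [right|..]
           | by apply: (below (Config 2 3 2 0 0)); [right|..]
           | by apply: (below (Config 2 2 3 0 0)); [right|..] ].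
Qed.

Section Necessity.

Variable E0 : config.
Hypothesis E0_chips : chips_only E0.

(* The configurations reachable from E0 with fewer than three dominoes:
   nothing happened, one Rule-1 move on three colours, or two Rule-1 moves
   using every colour once or twice. *)
Definition early_state (G : config) : Prop :=
  [\/ G = E0,
      [/\ cd G = 1, cx G = 1, ca E0 = ca G + 1, cb E0 = cb G + 1 & cc E0 = cc G + 1]
    | cd G = 2 /\ exists ua ub uc,
        [/\ ca E0 = ca G + ua, cb E0 = cb G + ub, cc E0 = cc G + uc,
            [&& 0 < ua <= 2, 0 < ub <= 2, 0 < uc <= 2 & 0 < cx G <= 2]
          & ua + ub + uc = 4 + cx G]].

(* One more exchange either stays early, or is the third Rule-1 move, whose
   usage pattern then dominates a copy of M or N. *)
Lemma early_state_exchange G H :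
  early_state G -> exchange G H -> early_state H \/ containsMN E0.
Proof.
have [E0x E0d] := E0_chips.
move=> hG [[ea [eb [ec [j [[hsum ha hb hc hx] ->]]]]] | [hd ->]]; last first.
  by exfalso; case: hG hd => [-> | [-> ] | [->]] //; rewrite E0d.
case: hG => [eG | [hd hx1 hA hB hC] | [hd [ua [ub [uc [hA hB hC /and4P [] hua hub huc hxG husum]]]]]].
- subst G; left; apply: Or32; rewrite /= E0d.
  by move: hsum ha hb hc hx; rewrite E0x; case: ea; case: eb; case: ec => /= *; split; lia.
- left; apply: Or33; split=> /=; first lia.
  exists (1 + ea), (1 + eb), (1 + ec).
  by move: hsum ha hb hc hx; case: ea; case: eb; case: ec => /= *; split; lia.
- right; apply: (@large_usage_containsMN E0 (ua + ea) (ub + eb) (uc + ec)).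
  all: move: hua hub huc hxG hsum ha hb hc hx;
       case: ea; case: eb; case: ec => /= /andP [? ?] /andP [? ?] /andP [? ?] /andP [? ?] *; lia.
Qed.

Lemma yields_early_state G : yields E0 G -> early_state G \/ containsMN E0.
Proof.
move/(clos_rt_rtn1 _ _ _ _); elim=> [|y z hyz _ [hy | hE]]; last by right.
- by left; apply: Or31.
- exact: early_state_exchange hy hyz.
Qed.

Lemma early_state_bounds G :
  early_state G -> cd G <= 2 /\ (0 < cd G -> 2 * cd G < chips E0).
Proof.
have [_ E0d] := E0_chips; rewrite /chips.
case=> [-> | [-> _ -> -> ->] | [-> [ua [ub [uc [-> -> -> /and4P [] ? ? ? ? ?]]]]]].
all: rewrite ?E0d; lia.
Qed.

Lemma dominoes_need_MN G :
  yields E0 G -> 0 < cd G -> 3 <= cd G \/ chips E0 <= 2 * cd G -> containsMN E0.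
Proof.
case/yields_early_state=> [/early_state_bounds [hle hlt] hpos | //].
by have := hlt hpos; lia.
Qed.

End Necessity.

Lemma containsMN_chips E : containsMN E -> 7 <= chips E.
Proof. by case=> F [/pattern_chips [hF _ _] [? ? ? _ _]]; rewrite /chips in hF *; lia. Qed.

Lemma sufficient_containsMN E : chips_only E -> sufficient E -> containsMN E.
Proof.
move=> hE [G [hy [_ _ _ _ /= hd]]].
by apply: (dominoes_need_MN hE hy); [lia | left].
Qed.

Lemma survival_containsMN p I :
  1 <= p -> initial p I -> survival p I -> containsMN I.
Proof.
move=> hp [hI hsum] [G [hy [_ _ _ _ /= hd]]].
by apply: (dominoes_need_MN hI hy); [lia | right; rewrite /chips hsum /=; lia].
Qed.

(* A part of a copy of M or N that still contains such a copy is the whole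
   copy: both have 7 chips. *)
Lemma pattern_sub_eq E E' : pattern E -> cle E' E -> containsMN E' -> E' = E.
Proof.
move=> /pattern_chips [hE hx hd] [ha hb hc hx' hd'] /containsMN_chips.
rewrite /chips in hE *; case: E E' hE hx hd ha hb hc hx' hd' => ? ? ? ? ? [? ? ? ? ?] /= *.
f_equal; lia.
Qed.

Theorem theorem4p2 :
  (forall E : config,
     minimal_sufficient E <-> (color_perm M E \/ color_perm N E)) /\
  (forall (p : nat) (I : config), 1 <= p -> initial p I ->
     (survival p I <->
      exists F, (color_perm M F \/ color_perm N F) /\ cle F I)) /\
  (forall p : nat, 1 <= p -> (nontrivial_game p <-> 4 <= p)).
Proof.
split; [|split].
- move=> E; split.
  + case=> hE [hsuff hmin]; have [F [hF hFE]] := sufficient_containsMN hE hsuff.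
    case: (classic (F = E)) => [<- // | hne]; exfalso.
    by apply: (hmin F hFE hne); apply: containsMN_achieves; exists F; split.
  + move=> hE; have [_ hx hd] := pattern_chips hE.
    have hsuff : sufficient E by apply: containsMN_achieves; exists E; split.
    split; first by []; split=> //.
    move=> E' hle hne hsuff'; apply: hne.
    apply: (pattern_sub_eq hE hle (sufficient_containsMN _ hsuff')).
    by case: hle => _ _ _ ? ?; split; lia.
- move=> p I hp hI; split; first exact: survival_containsMN.
  exact: containsMN_achieves.
- move=> p hp; split.
  + move=> hnt; case: (leqP 4 p) => // hp4; exfalso; apply: hnt => I hI hsurv.
    have := containsMN_chips (survival_containsMN hp hI hsurv).
    by case: hI => _; rewrite /chips => ->; lia.
  + move=> hp4 htriv; apply: (htriv (Config (2 * p - 4) 2 2 0 0)).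
      by split=> //=; lia.
    apply: containsMN_achieves; exists N; split; first by right.
    by split=> /=; lia.
Qed.
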